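(* Let $\mathbf{h}_1,\mathbf{h}_2\in\mathbb{C}^M$ be linearly independent, $P,\sigma^2>0$, and let $\kappa=\lambda_1/\lambda_2$ and $\theta$ be as in the context. Define $\eta(\kappa,\theta)=10\log_{10}\frac{\mathrm{SNR}_{\rm md}}{\mathrm{SNR}_{\rm zf}}$. Then: (1) if $0<\kappa\le1$ and $0\le\sin\theta\le\kappa$: $\eta=10\log_{10}\frac{1+\sin^2\theta}{(1-\sin\theta)^2}$; (2) if $0<\kappa\le1$ and $\kappa<\sin\theta<1$: $\eta=10\log_{10}\frac{(1+\sin^2\theta)(\kappa+\sin^2\theta)(1+1/\kappa)}{\cos^4\theta}$; (3) if $\kappa>1$ and $0\le\sin\theta\le1/\kappa$: $\eta=10\log_{10}\frac{1+\sin^2\theta}{(1-\sin\theta)^2}$; (4) if $\kappa>1$ and $1/\kappa<\sin\theta<1$: $\eta=10\log_{10}\frac{(1+\sin^2\theta)(1/\kappa+\sin^2\theta)(1+\kappa)}{\cos^4\theta}$.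
   Context: $\mathbf{A}=\mathbf{h}_1\mathbf{h}_1^H-\mathbf{h}_2\mathbf{h}_2^H=\mathbf{V}\,\mathrm{diag}(\lambda_1,-\lambda_2,0,\dots,0)\mathbf{V}^H$ with $\mathbf{V}$ unitary and $\lambda_1,\lambda_2>0$; $\tilde h_{1,1}$ is the first entry of $\mathbf{V}^H\mathbf{h}_1$ and $\theta=\arccos\frac{\sqrt{\lambda_1}}{|\tilde h_{1,1}|}\in[0,\pi/2)$. With $\mathbf{H}=[\mathbf{h}_1\ \mathbf{h}_2]$ and $\mu_1,\mu_2$ the eigenvalues of $\mathbf{H}^H\mathbf{H}$: $\mathrm{SNR}_{\rm zf}=\frac{P}{\sigma^2\sum_{i=1}^2[(\mathbf{H}^H\mathbf{H})^{-1}]_{i,i}}=\frac{P\mu_1\mu_2}{\sigma^2(\mu_1+\mu_2)}$, and $\mathrm{SNR}_{\rm md}=\frac{1}{\sigma^2}\max_{\mathbf{w}\in\mathbb{C}^M,\ \|\mathbf{w}\|^2=P}\min\{|\mathbf{h}_1^H\mathbf{w}|^2,|\mathbf{h}_2^H\mathbf{w}|^2\}$. *)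

From Stdlib Require Import Reals Lra.
Open Scope R_scope.

Definition Cplx : Type := (R * R)%type.
Definition C0 : Cplx := (0, 0).
Definition RtoC (x : R) : Cplx := (x, 0).
Definition Cadd (z w : Cplx) : Cplx := (fst z + fst w, snd z + snd w).
Definition Cmul (z w : Cplx) : Cplx :=
  (fst z * fst w - snd z * snd w, fst z * snd w + snd z * fst w).
Definition Cconj (z : Cplx) : Cplx := (fst z, - snd z).
Definition Cnorm2 (z : Cplx) : R := fst z * fst z + snd z * snd z.
Definition Cmod (z : Cplx) : R := sqrt (Cnorm2 z).

Fixpoint Csum (n : nat) (f : nat -> Cplx) : Cplx :=
  match n with
  | O => C0
  | S n' => Cadd (Csum n' f) (f n')
  end.

(* a vector of Cplx^M is a function nat -> Cplx, of which only indices k < M matter;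
   a matrix is a function nat -> nat -> Cplx (row, column). *)

Definition inner (M : nat) (x y : nat -> Cplx) : Cplx :=
  Csum M (fun k => Cmul (Cconj (x k)) (y k)).

Definition vnorm2 (M : nat) (w : nat -> Cplx) : R := fst (inner M w w).

Definition lin_indep2 (M : nat) (h1 h2 : nat -> Cplx) : Prop :=
  forall a b : Cplx,
    (forall k, (k < M)%nat -> Cadd (Cmul a (h1 k)) (Cmul b (h2 k)) = C0) ->
    a = C0 /\ b = C0.

Definition kron (i j : nat) : Cplx := if Nat.eqb i j then RtoC 1 else C0.

Definition unitary (M : nat) (V : nat -> nat -> Cplx) : Prop :=
  (forall i j, (i < M)%nat -> (j < M)%nat ->
     Csum M (fun k => Cmul (Cconj (V k i)) (V k j)) = kron i j) /\
  (forall i j, (i < M)%nat -> (j < M)%nat ->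
     Csum M (fun k => Cmul (V i k) (Cconj (V j k))) = kron i j).

Definition dval (l1 l2 : R) (k : nat) : R :=
  match k with
  | O => l1
  | S O => - l2
  | _ => 0
  end.

(* A = h1 h1^H - h2 h2^H = V diag(l1, -l2, 0, ..., 0) V^H, entrywise *)
Definition eig_decomp (M : nat) (h1 h2 : nat -> Cplx) (V : nat -> nat -> Cplx)
    (l1 l2 : R) : Prop :=
  forall i j, (i < M)%nat -> (j < M)%nat ->
    Cadd (Cmul (h1 i) (Cconj (h1 j))) (Cmul (RtoC (-1)) (Cmul (h2 i) (Cconj (h2 j))))
    = Csum M (fun k => Cmul (V i k) (Cmul (RtoC (dval l1 l2 k)) (Cconj (V j k)))).

Definition htilde11 (M : nat) (h1 : nat -> Cplx) (V : nat -> nat -> Cplx) : Cplx :=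
  Csum M (fun k => Cmul (Cconj (V k O)) (h1 k)).

Definition theta (M : nat) (h1 : nat -> Cplx) (V : nat -> nat -> Cplx) (l1 : R) : R :=
  acos (sqrt l1 / Cmod (htilde11 M h1 V)).

(* Gram matrix H^H H = [[g11, g12], [g21, g22]] for H = [h1 h2] *)
Definition g11 M (h1 h2 : nat -> Cplx) : R := vnorm2 M h1.
Definition g22 M (h1 h2 : nat -> Cplx) : R := vnorm2 M h2.
Definition gdet M (h1 h2 : nat -> Cplx) : R :=
  g11 M h1 h2 * g22 M h1 h2 - Cnorm2 (inner M h1 h2).
(* diagonal entries of (H^H H)^{-1} (2x2 inverse: adjugate / determinant) *)
Definition ginv11 M (h1 h2 : nat -> Cplx) : R := g22 M h1 h2 / gdet M h1 h2.
Definition ginv22 M (h1 h2 : nat -> Cplx) : R := g11 M h1 h2 / gdet M h1 h2.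

Definition SNR_zf M (h1 h2 : nat -> Cplx) (P sigma2 : R) : R :=
  P / (sigma2 * (ginv11 M h1 h2 + ginv22 M h1 h2)).

Definition md_obj M (h1 h2 : nat -> Cplx) (sigma2 : R) (w : nat -> Cplx) : R :=
  / sigma2 * Rmin (Cnorm2 (inner M h1 w)) (Cnorm2 (inner M h2 w)).

Definition is_SNR_md M (h1 h2 : nat -> Cplx) (P sigma2 : R) (s : R) : Prop :=
  (exists w, vnorm2 M w = P /\ md_obj M h1 h2 sigma2 w = s) /\
  (forall w, vnorm2 M w = P -> md_obj M h1 h2 sigma2 w <= s).

Definition log10 (x : R) : R := ln x / ln 10.

(** The max-min beamformer of two users only sees the Gram entries
    a = |h1|^2, b = |h2|^2, g = |h1^H h2|.  The Gram (Bessel) inequality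
    b |h1^H w|^2 + a |h2^H w|^2 - 2 g |h1^H w| |h2^H w| <= (a b - g^2) |w|^2
    bounds every beamformer, and w = t1 h1 + t2 e h2, with e a unit phase
    aligning h1^H h2, attains the bound: when g <= min(a, b) both users get
    the gain P (a b - g^2) / (a + b - 2 g), otherwise only the weaker user
    can be served, with gain P min(a, b).
    Evaluating h1h1^H - h2h2^H on its eigenvectors v1, v2 expresses the Gram
    entries through lambda1, lambda2 and s = sin theta = |h2^H v1| / |h1^H v1|:
    a (1 - s^2) = lambda1 + s^2 lambda2, b (1 - s^2) = s^2 lambda1 + lambda2,
    g (1 - s^2) = s (lambda1 + lambda2), hence a b - g^2 = lambda1 lambda2.
    The ratio SNR_md / SNR_zf = gain (a + b) / (a b - g^2) then yields the four
    cases, the threshold g <= min(a, b) reading s <= min(kappa, 1/kappa). *)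

From Stdlib Require Import Reals Lra Psatz Lia.
Open Scope R_scope.

Definition Cone : Cplx := (1, 0).
Definition Copp (z : Cplx) : Cplx := (- fst z, - snd z).
Definition Csub (z w : Cplx) : Cplx := Cadd z (Copp w).

Lemma Cpair_eq (a b c d : R) : a = c -> b = d -> (a, b) = (c, d).
Proof. intros; subst; reflexivity. Qed.

Ltac cdestruct := repeat match goal with z : Cplx |- _ => destruct z end.
Ltac csolve := cdestruct; unfold Csub, C0, Cone, Cadd, Cmul, Copp, Cconj, RtoC;
  simpl; apply Cpair_eq; ring.

Lemma Cring : ring_theory C0 Cone Cadd Cmul Csub Copp (@eq Cplx).
Proof. constructor; intros; csolve. Qed.
Add Ring Cring : Cring.

Lemma Cconj_add z w : Cconj (Cadd z w) = Cadd (Cconj z) (Cconj w).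
Proof. csolve. Qed.

Lemma Cconj_mul z w : Cconj (Cmul z w) = Cmul (Cconj z) (Cconj w).
Proof. csolve. Qed.

Lemma Cnorm2_ge0 z : 0 <= Cnorm2 z.
Proof. destruct z; unfold Cnorm2; simpl; nra. Qed.

Lemma Cnorm2_mul z w : Cnorm2 (Cmul z w) = Cnorm2 z * Cnorm2 w.
Proof. destruct z, w; unfold Cnorm2, Cmul; simpl; ring. Qed.

Lemma Cnorm2_conj z : Cnorm2 (Cconj z) = Cnorm2 z.
Proof. destruct z; unfold Cnorm2, Cconj; simpl; ring. Qed.

Lemma Cmod_ge0 z : 0 <= Cmod z.
Proof. apply sqrt_pos. Qed.

Lemma Cmod_sq z : Cmod z * Cmod z = Cnorm2 z.
Proof. apply sqrt_sqrt, Cnorm2_ge0. Qed.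

Lemma Cmod_mul z w : Cmod (Cmul z w) = Cmod z * Cmod w.
Proof. unfold Cmod; rewrite Cnorm2_mul; apply sqrt_mult; apply Cnorm2_ge0. Qed.

Lemma Cmod_conj z : Cmod (Cconj z) = Cmod z.
Proof. unfold Cmod; rewrite Cnorm2_conj; reflexivity. Qed.

Lemma Re_le_Cmod z : fst z <= Cmod z.
Proof.
  destruct z as [x y]; unfold Cmod, Cnorm2; simpl.
  destruct (Rle_dec x 0); [pose proof (sqrt_pos (x * x + y * y)); lra|].
  rewrite <- (sqrt_square x) at 1 by lra. apply sqrt_le_1_alt. nra.
Qed.

Lemma Cmul_real_eq0 r z : r <> 0 -> Cmul (RtoC r) z = C0 -> z = C0.
Proof.
  destruct z as [x y]; unfold Cmul, RtoC, C0; simpl; intros Hr E.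
  injection E as Ex Ey. apply Cpair_eq; apply (Rmult_eq_reg_l r); lra.
Qed.

Lemma unit_phase z : exists e, Cnorm2 e = 1 /\ Cmul e z = RtoC (Cmod z).
Proof.
  destruct (Req_dec (Cnorm2 z) 0) as [H0|H0].
  - exists Cone. destruct z as [x y]. unfold Cmod, Cnorm2 in *; simpl in *.
    assert (x = 0) by nra. assert (y = 0) by nra. subst.
    rewrite H0, sqrt_0. split; [unfold Cone; simpl; ring | csolve].
  - assert (Hm : 0 < Cmod z) by (apply sqrt_lt_R0; pose proof (Cnorm2_ge0 z); lra).
    pose proof (Cmod_sq z) as Hsq.
    destruct z as [x y]; unfold Cnorm2 in *; simpl in *.
    set (m := Cmod (x, y)) in *; clearbody m.
    exists (x / m, - y / m); unfold Cmul, RtoC; simpl. split.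
    + transitivity ((x * x + y * y) / (m * m)); [field; lra|]. rewrite Hsq; field; lra.
    + apply Cpair_eq; [|field; lra].
      transitivity ((x * x + y * y) / m); [field; lra|]. rewrite <- Hsq; field; lra.
Qed.

Lemma Csum_ext n f g : (forall k, (k < n)%nat -> f k = g k) -> Csum n f = Csum n g.
Proof. induction n; intros H; simpl; auto. rewrite IHn, H; auto. Qed.

Lemma Csum_add n f g : Csum n (fun k => Cadd (f k) (g k)) = Cadd (Csum n f) (Csum n g).
Proof. induction n; simpl; [csolve|]. rewrite IHn; ring. Qed.

Lemma Csum_mull n c f : Csum n (fun k => Cmul c (f k)) = Cmul c (Csum n f).
Proof. induction n; simpl; [csolve|]. rewrite IHn; ring. Qed.

Lemma Csum_mulr n c f : Csum n (fun k => Cmul (f k) c) = Cmul (Csum n f) c.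
Proof. induction n; simpl; [csolve|]. rewrite IHn; ring. Qed.

Lemma Csum_conj n f : Cconj (Csum n f) = Csum n (fun k => Cconj (f k)).
Proof. induction n; simpl; [csolve|]. rewrite Cconj_add, IHn; auto. Qed.

Lemma Csum_zero n : Csum n (fun _ => C0) = C0.
Proof. induction n; simpl; auto. rewrite IHn; csolve. Qed.

Lemma Csum_swap n m (f : nat -> nat -> Cplx) :
  Csum n (fun i => Csum m (fun j => f i j)) = Csum m (fun j => Csum n (fun i => f i j)).
Proof.
  induction n; simpl.
  - rewrite Csum_zero; auto.
  - rewrite IHn, <- Csum_add; auto.
Qed.

Lemma Csum_kron n j f : (j < n)%nat -> Csum n (fun k => Cmul (f k) (kron k j)) = f j.
Proof.
  induction n; intros Hj; [lia|]. simpl. unfold kron at 2.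
  destruct (Nat.eq_dec j n) as [->|Hne].
  - rewrite Nat.eqb_refl, (Csum_ext n _ (fun _ => C0)), Csum_zero; [destruct (f n); csolve|].
    intros k Hk. unfold kron. replace (Nat.eqb k n) with false; [destruct (f k); csolve|].
    symmetry; apply Nat.eqb_neq; lia.
  - rewrite IHn by lia. replace (Nat.eqb n j) with false; [destruct (f n), (f j); csolve|].
    symmetry; apply Nat.eqb_neq; lia.
Qed.

Definition vadd (x y : nat -> Cplx) : nat -> Cplx := fun k => Cadd (x k) (y k).
Definition vscal (c : Cplx) (x : nat -> Cplx) : nat -> Cplx := fun k => Cmul c (x k).

Lemma inner_conj M x y : inner M y x = Cconj (inner M x y).
Proof. unfold inner. rewrite Csum_conj. apply Csum_ext; intros; csolve. Qed.

Lemma inner_vaddr M x y z : inner M x (vadd y z) = Cadd (inner M x y) (inner M x z).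
Proof. unfold inner, vadd. rewrite <- Csum_add. apply Csum_ext; intros; ring. Qed.

Lemma inner_vscalr M x c y : inner M x (vscal c y) = Cmul c (inner M x y).
Proof. unfold inner, vscal. rewrite <- Csum_mull. apply Csum_ext; intros; ring. Qed.

Lemma inner_vaddl M x y z : inner M (vadd y z) x = Cadd (inner M y x) (inner M z x).
Proof. rewrite !(inner_conj M x), inner_vaddr, Cconj_add; auto. Qed.

Lemma inner_vscall M x c y : inner M (vscal c y) x = Cmul (Cconj c) (inner M y x).
Proof. rewrite !(inner_conj M x), inner_vscalr, Cconj_mul; auto. Qed.

Lemma inner_self M x : snd (inner M x x) = 0 /\ 0 <= fst (inner M x x).
Proof.
  unfold inner. induction M; simpl; [lra|].
  destruct IHM. destruct (x M) as [p q]. simpl. split; nra.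
Qed.

Lemma inner_self_real M x : inner M x x = RtoC (vnorm2 M x).
Proof.
  destruct (inner_self M x) as [H _]. unfold vnorm2, RtoC.
  destruct (inner M x x); simpl in *; subst; auto.
Qed.

Lemma vnorm2_ge0 M x : 0 <= vnorm2 M x.
Proof. apply inner_self. Qed.

(** * The two-user max-min beamforming problem *)

Section Gram.
Variables (M : nat) (h1 h2 : nat -> Cplx).
Local Notation a := (g11 M h1 h2).
Local Notation b := (g22 M h1 h2).
Local Notation G := (inner M h1 h2).

Lemma gdet_Cmod : gdet M h1 h2 = a * b - Cmod G * Cmod G.
Proof. unfold gdet. rewrite Cmod_sq. reflexivity. Qed.

Lemma gdet_pos_gram_diag : 0 < gdet M h1 h2 -> 0 < a /\ 0 < b.
Proof.
  rewrite gdet_Cmod. intros Hd.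
  pose proof (vnorm2_ge0 M h1). pose proof (vnorm2_ge0 M h2).
  fold (g11 M h1 h2) (g22 M h1 h2) in *.
  assert (a <> 0) by (intros E; rewrite E in Hd; nra).
  assert (b <> 0) by (intros E; rewrite E in Hd; nra).
  lra.
Qed.

(** The squared norm of the residual [gdet w - d1 h1 - d2 h2] of [gdet w]
    after projection onto span(h1, h2) is [gdet] times the slack. *)
Lemma gram_quadratic_bound w :
  0 < gdet M h1 h2 ->
  b * Cnorm2 (inner M h1 w) + a * Cnorm2 (inner M h2 w)
   - 2 * fst (Cmul (Cmul (Cconj (inner M h1 w)) G) (inner M h2 w))
  <= gdet M h1 h2 * vnorm2 M w.
Proof.
  intros Hd.
  set (X1 := inner M h1 w). set (X2 := inner M h2 w). set (gd := gdet M h1 h2).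
  set (Q := b * Cnorm2 X1 + a * Cnorm2 X2 - 2 * fst (Cmul (Cmul (Cconj X1) G) X2)).
  set (d1 := Csub (Cmul (RtoC b) X1) (Cmul G X2)).
  set (d2 := Csub (Cmul (RtoC a) X2) (Cmul (Cconj G) X1)).
  set (z := vadd (vscal (RtoC gd) w) (vadd (vscal (Copp d1) h1) (vscal (Copp d2) h2))).
  assert (Hz : inner M z z = RtoC (gd * (gd * vnorm2 M w - Q))).
  { unfold z. rewrite !inner_vaddl, !inner_vaddr, !inner_vscall, !inner_vscalr.
    rewrite (inner_conj M h1 w), (inner_conj M h2 w), (inner_conj M h1 h2).
    fold X1 X2. rewrite !inner_self_real.
    unfold Q, gd, gdet, d1, d2, g11, g22.
    generalize (vnorm2 M w) (vnorm2 M h1) (vnorm2 M h2). intros N p q.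
    clearbody X1 X2. destruct X1, X2, (inner M h1 h2).
    unfold Cnorm2, Cmul, Cconj, Cadd, RtoC, Csub, Copp; simpl. apply Cpair_eq; ring. }
  pose proof (vnorm2_ge0 M z) as Hz0.
  rewrite inner_self_real in Hz. unfold RtoC in Hz. injection Hz as Hz. rewrite Hz in Hz0.
  assert (0 <= gd * vnorm2 M w - Q) by (apply (Rmult_le_reg_l gd); [exact Hd | lra]).
  unfold Q in *. lra.
Qed.

Lemma gram_modulus_bound w :
  0 < gdet M h1 h2 ->
  let R1 := Cmod (inner M h1 w) in let R2 := Cmod (inner M h2 w) in
  b * (R1 * R1) + a * (R2 * R2) - 2 * Cmod G * R1 * R2 <= gdet M h1 h2 * vnorm2 M w.
Proof.
  intros Hd R1 R2. pose proof (gram_quadratic_bound w Hd) as B.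
  unfold R1, R2. rewrite !Cmod_sq.
  pose proof (Re_le_Cmod (Cmul (Cmul (Cconj (inner M h1 w)) G) (inner M h2 w))) as Hre.
  rewrite !Cmod_mul, Cmod_conj in Hre. lra.
Qed.

Lemma aligned_beamformer e t1 t2 :
  Cnorm2 e = 1 -> Cmul e G = RtoC (Cmod G) ->
  let w := vadd (vscal (RtoC t1) h1) (vscal (Cmul (RtoC t2) e) h2) in
  Cnorm2 (inner M h1 w) = (t1 * a + t2 * Cmod G) ^ 2 /\
  Cnorm2 (inner M h2 w) = (t1 * Cmod G + t2 * b) ^ 2 /\
  vnorm2 M w = t1 ^ 2 * a + t2 ^ 2 * b + 2 * t1 * t2 * Cmod G.
Proof.
  intros He HeG w. pose proof (Cmod_sq G) as Hg.
  unfold vnorm2, w, g11, g22.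
  rewrite !inner_vaddl, !inner_vaddr, !inner_vscall, !inner_vscalr, (inner_conj M h1 h2).
  rewrite !inner_self_real.
  generalize (vnorm2 M h1) (vnorm2 M h2). intros p q.
  set (g := Cmod G) in *. clearbody g.
  destruct e as [er ei]. destruct G as [gr gi].
  unfold Cnorm2, Cmul, RtoC in *; simpl in *.
  injection HeG as H1 H2.
  split; [|split].
  - transitivity ((t1 * p + t2 * (er * gr - ei * gi)) ^ 2 + (t2 * (er * gi + ei * gr)) ^ 2);
      [ring|]. rewrite H1, H2. ring.
  - transitivity (t1 ^ 2 * (gr * gr + gi * gi) + t2 ^ 2 * q ^ 2 * (er * er + ei * ei)
                  + 2 * t1 * t2 * q * (er * gr - ei * gi)); [ring|].
    rewrite H1, <- Hg, He. ring.
  - transitivity (t1 ^ 2 * p + 2 * t1 * t2 * (er * gr - ei * gi) + t2 ^ 2 * (er * er + ei * ei) * q);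
      [ring|]. rewrite H1, He. ring.
Qed.

End Gram.

Definition maxmin_gain (a b g : R) : R :=
  if Rle_dec g (Rmin a b) then (a * b - g * g) / (a + b - 2 * g) else Rmin a b.

Section MaxminGain.
Variables (a b g : R).
Hypotheses (Ha : 0 < a) (Hb : 0 < b) (Hg : 0 <= g) (Hdet : 0 < a * b - g * g).

Lemma equalized_gain_bound R1 R2 P :
  g <= a -> g <= b -> 0 <= R1 -> 0 <= R2 ->
  b * (R1 * R1) + a * (R2 * R2) - 2 * g * R1 * R2 <= (a * b - g * g) * P ->
  Rmin (R1 * R1) (R2 * R2) <= P * ((a * b - g * g) / (a + b - 2 * g)).
Proof.
  intros Hga Hgb H1 H2 Hq.
  assert (Hs : 0 < a + b - 2 * g) by nra.
  apply Rmult_le_reg_r with (a + b - 2 * g); auto.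
  replace (P * ((a * b - g * g) / (a + b - 2 * g)) * (a + b - 2 * g))
    with ((a * b - g * g) * P) by (field; lra).
  unfold Rmin; destruct (Rle_dec (R1 * R1) (R2 * R2)).
  - assert (R1 <= R2) by nra.
    assert (0 <= (R2 - R1) * (a * (R2 - R1) + 2 * R1 * (a - g))) by (apply Rmult_le_pos; nra).
    nra.
  - assert (R2 <= R1) by nra.
    assert (0 <= (R1 - R2) * (b * (R1 - R2) + 2 * R2 * (b - g))) by (apply Rmult_le_pos; nra).
    nra.
Qed.

Lemma single_user_gain_bound R1 R2 P :
  b * (R1 * R1) + a * (R2 * R2) - 2 * g * R1 * R2 <= (a * b - g * g) * P ->
  R1 * R1 <= P * a.
Proof.
  intros Hq.
  assert (E : a * (b * (R1 * R1) + a * (R2 * R2) - 2 * g * R1 * R2)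
              = (a * R2 - g * R1) ^ 2 + R1 * R1 * (a * b - g * g)) by ring.
  pose proof (pow2_ge_0 (a * R2 - g * R1)). nra.
Qed.

Lemma maxmin_gain_upper R1 R2 P :
  0 <= R1 -> 0 <= R2 ->
  b * (R1 * R1) + a * (R2 * R2) - 2 * g * R1 * R2 <= (a * b - g * g) * P ->
  Rmin (R1 * R1) (R2 * R2) <= P * maxmin_gain a b g.
Proof.
  intros H1 H2 Hq. unfold maxmin_gain. destruct (Rle_dec g (Rmin a b)) as [Hm|_].
  - apply equalized_gain_bound; auto;
      [apply Rle_trans with (Rmin a b); [exact Hm | apply Rmin_l]
      |apply Rle_trans with (Rmin a b); [exact Hm | apply Rmin_r]].
  - pose proof (single_user_gain_bound R1 R2 P Hq).
    assert (R2 * R2 <= P * b).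
    { apply (Rmult_le_reg_l b); [exact Hb|].
      pose proof (pow2_ge_0 (b * R1 - g * R2)). nra. }
    unfold Rmin; destruct (Rle_dec (R1 * R1) (R2 * R2)), (Rle_dec a b); nra.
Qed.

(** Equal gains for [(t1, t2)] proportional to [(b - g, a - g)]; otherwise only the weaker user. *)
Lemma maxmin_gain_attained P :
  0 < P ->
  exists t1 t2, t1 ^ 2 * a + t2 ^ 2 * b + 2 * t1 * t2 * g = P /\
    Rmin ((t1 * a + t2 * g) ^ 2) ((t1 * g + t2 * b) ^ 2) = P * maxmin_gain a b g.
Proof.
  intros HP. unfold maxmin_gain. destruct (Rle_dec g (Rmin a b)) as [Hm|Hm].
  - assert (g <= a /\ g <= b) as [Hga Hgb]
      by (unfold Rmin in Hm; destruct (Rle_dec a b); split; lra).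
    assert (Hs : 0 < a + b - 2 * g) by nra.
    set (k := sqrt (P / ((a * b - g * g) * (a + b - 2 * g)))).
    assert (Hk : k * k = P / ((a * b - g * g) * (a + b - 2 * g)))
      by (apply sqrt_sqrt, Rlt_le, Rdiv_lt_0_compat; [lra | nra]).
    exists (k * (b - g)), (k * (a - g)). split.
    + transitivity (k * k * ((a * b - g * g) * (a + b - 2 * g))); [ring|].
      rewrite Hk. field. split; lra.
    + replace ((k * (b - g) * a + k * (a - g) * g) ^ 2) with (k * k * (a * b - g * g) ^ 2) by ring.
      replace ((k * (b - g) * g + k * (a - g) * b) ^ 2) with (k * k * (a * b - g * g) ^ 2) by ring.
      rewrite Rmin_left by lra. rewrite Hk. field. split; lra.
  - destruct (Rle_dec a b).
    + rewrite (Rmin_left a b) in * by lra.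
      set (k := sqrt (P / a)).
      assert (Hk : k * k = P / a) by (apply sqrt_sqrt, Rlt_le, Rdiv_lt_0_compat; lra).
      exists k, 0. split; [transitivity (k * k * a); [ring | rewrite Hk; field; lra]|].
      rewrite Rmin_left.
      * transitivity (k * k * a * a); [ring | rewrite Hk; field; lra].
      * replace ((k * a + 0 * g) ^ 2) with (k * k * (a * a)) by ring.
        replace ((k * g + 0 * b) ^ 2) with (k * k * (g * g)) by ring.
        apply Rmult_le_compat_l; [rewrite Hk; apply Rlt_le, Rdiv_lt_0_compat; lra | nra].
    + rewrite (Rmin_right a b) in * by lra.
      set (k := sqrt (P / b)).
      assert (Hk : k * k = P / b) by (apply sqrt_sqrt, Rlt_le, Rdiv_lt_0_compat; lra).
      exists 0, k. split; [transitivity (k * k * b); [ring | rewrite Hk; field; lra]|].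
      rewrite Rmin_right.
      * transitivity (k * k * b * b); [ring | rewrite Hk; field; lra].
      * replace ((0 * a + k * g) ^ 2) with (k * k * (g * g)) by ring.
        replace ((0 * g + k * b) ^ 2) with (k * k * (b * b)) by ring.
        apply Rmult_le_compat_l; [rewrite Hk; apply Rlt_le, Rdiv_lt_0_compat; lra | nra].
Qed.

End MaxminGain.

Lemma is_SNR_md_maxmin_gain M h1 h2 P sigma2 :
  0 < P -> 0 < sigma2 -> 0 < gdet M h1 h2 ->
  is_SNR_md M h1 h2 P sigma2
    (/ sigma2 * (P * maxmin_gain (g11 M h1 h2) (g22 M h1 h2) (Cmod (inner M h1 h2)))).
Proof.
  intros HP Hs Hd. destruct (gdet_pos_gram_diag M h1 h2 Hd) as [Ha Hb].
  pose proof (Cmod_ge0 (inner M h1 h2)) as Hg.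
  pose proof Hd as Hdet. rewrite gdet_Cmod in Hdet.
  split.
  - destruct (maxmin_gain_attained _ _ _ Ha Hb Hg Hdet P HP) as (t1 & t2 & Hw & Hv).
    destruct (unit_phase (inner M h1 h2)) as (e & He & HeG).
    destruct (aligned_beamformer M h1 h2 e t1 t2 He HeG) as (A1 & A2 & A3).
    eexists; split; [rewrite A3; exact Hw|].
    unfold md_obj. rewrite A1, A2, Hv. reflexivity.
  - intros w Hw. unfold md_obj.
    apply Rmult_le_compat_l; [left; apply Rinv_0_lt_compat; exact Hs|].
    rewrite <- !Cmod_sq. apply maxmin_gain_upper; auto using Cmod_ge0.
    pose proof (gram_modulus_bound M h1 h2 w Hd) as B. cbv zeta in B.
    rewrite Hw, gdet_Cmod in B. exact B.
Qed.

Lemma SNR_zf_gram M h1 h2 P sigma2 :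
  SNR_zf M h1 h2 P sigma2 = P / (sigma2 * ((g11 M h1 h2 + g22 M h1 h2) / gdet M h1 h2)).
Proof. unfold SNR_zf, ginv11, ginv22, Rdiv. f_equal. f_equal. ring. Qed.

(** * Gram entries from the eigen-decomposition *)

Lemma lin_indep2_dim_ge2 M h1 h2 : lin_indep2 M h1 h2 -> (2 <= M)%nat.
Proof.
  intros H. destruct M as [|[|M]]; [| |lia].
  - destruct (H Cone C0) as [E _]; [intros k Hk; lia|].
    injection E. lra.
  - destruct (H (h2 O) (Copp (h1 O))) as [_ E2].
    { intros k Hk. replace k with O by lia. destruct (h1 O), (h2 O); csolve. }
    assert (Hz : h1 O = C0).
    { destruct (h1 O) as [p q]. unfold Copp, C0 in *; simpl in *.
      injection E2 as Ep Eq. apply Cpair_eq; lra. }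
    destruct (H Cone C0) as [E _].
    { intros k Hk. replace k with O by lia. rewrite Hz. csolve. }
    injection E. lra.
Qed.

Definition col (V : nat -> nat -> Cplx) (k : nat) : nat -> Cplx := fun i => V i k.

Lemma quad_form_rank2 M h1 h2 x y :
  Csum M (fun i => Cmul (Cconj (x i)) (Csum M (fun j =>
     Cmul (Cadd (Cmul (h1 i) (Cconj (h1 j))) (Cmul (RtoC (-1)) (Cmul (h2 i) (Cconj (h2 j)))))
          (y j))))
  = Cadd (Cmul (inner M x h1) (inner M h1 y))
         (Cmul (RtoC (-1)) (Cmul (inner M x h2) (inner M h2 y))).
Proof.
  rewrite (Csum_ext M _ (fun i => Cadd (Cmul (Cmul (Cconj (x i)) (h1 i)) (inner M h1 y))
     (Cmul (RtoC (-1)) (Cmul (Cmul (Cconj (x i)) (h2 i)) (inner M h2 y))))).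
  - rewrite Csum_add, Csum_mull, !Csum_mulr. reflexivity.
  - intros i _. unfold inner.
    rewrite (Csum_ext M _ (fun j => Cadd (Cmul (h1 i) (Cmul (Cconj (h1 j)) (y j)))
       (Cmul (Cmul (RtoC (-1)) (h2 i)) (Cmul (Cconj (h2 j)) (y j))))).
    + rewrite Csum_add, !Csum_mull. ring.
    + intros j _. ring.
Qed.

Lemma quad_form_diagonalized M (V : nat -> nat -> Cplx) (d : nat -> R) x y :
  Csum M (fun i => Cmul (Cconj (x i)) (Csum M (fun j =>
     Cmul (Csum M (fun k => Cmul (V i k) (Cmul (RtoC (d k)) (Cconj (V j k))))) (y j))))
  = Csum M (fun k => Cmul (RtoC (d k)) (Cmul (inner M x (col V k)) (inner M (col V k) y))).
Proof.
  rewrite (Csum_ext M _ (fun i => Csum M (fun k =>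
      Cmul (Cmul (Cconj (x i)) (V i k)) (Cmul (RtoC (d k)) (inner M (col V k) y))))).
  - rewrite Csum_swap. apply Csum_ext. intros k _.
    rewrite Csum_mulr. unfold inner at 2. unfold col. ring.
  - intros i _.
    rewrite (Csum_ext M _ (fun j => Csum M (fun k =>
       Cmul (Cmul (V i k) (RtoC (d k))) (Cmul (Cconj (V j k)) (y j))))).
    + rewrite Csum_swap, <- Csum_mull. apply Csum_ext. intros k _. unfold inner, col.
      rewrite Csum_mull. ring.
    + intros j _. rewrite <- Csum_mulr. apply Csum_ext. intros k _. ring.
Qed.

(** [x^H A v_m = dval m * x^H v_m], computed from both expressions of [A]. *)
Lemma eig_decomp_apply M h1 h2 V l1 l2 x m :
  unitary M V -> eig_decomp M h1 h2 V l1 l2 -> (m < M)%nat ->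
  Cadd (Cmul (inner M x h1) (inner M h1 (col V m)))
       (Cmul (RtoC (-1)) (Cmul (inner M x h2) (inner M h2 (col V m))))
  = Cmul (RtoC (dval l1 l2 m)) (inner M x (col V m)).
Proof.
  intros [U1 _] E Hm.
  rewrite <- quad_form_rank2.
  rewrite (Csum_ext M _ (fun i => Cmul (Cconj (x i)) (Csum M (fun j =>
     Cmul (Csum M (fun k => Cmul (V i k) (Cmul (RtoC (dval l1 l2 k)) (Cconj (V j k)))))
          (col V m j))))).
  - rewrite quad_form_diagonalized.
    rewrite (Csum_ext M _ (fun k =>
      Cmul (Cmul (RtoC (dval l1 l2 k)) (inner M x (col V k))) (kron k m))).
    + apply Csum_kron; auto.
    + intros k Hk. unfold inner at 2. unfold col at 2 3. rewrite U1 by auto. ring.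
  - intros i Hi. f_equal. apply Csum_ext. intros j Hj. rewrite E by auto. reflexivity.
Qed.

Lemma eigvec_equations M h1 h2 V l1 l2 m :
  unitary M V -> eig_decomp M h1 h2 V l1 l2 -> (m < M)%nat ->
  let la := dval l1 l2 m in
  let X := inner M h1 (col V m) in let Y := inner M h2 (col V m) in
  let G := inner M h1 h2 in
  Cmul (RtoC (g11 M h1 h2 - la)) X = Cmul G Y /\
  Cmul (Cconj G) X = Cmul (RtoC (g22 M h1 h2 + la)) Y /\
  Cnorm2 X - Cnorm2 Y = la.
Proof.
  intros HU HE Hm la X Y G.
  pose proof (eig_decomp_apply M h1 h2 V l1 l2 h1 m HU HE Hm) as E1.
  pose proof (eig_decomp_apply M h1 h2 V l1 l2 h2 m HU HE Hm) as E2.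
  pose proof (eig_decomp_apply M h1 h2 V l1 l2 (col V m) m HU HE Hm) as E3.
  assert (Hv : inner M (col V m) (col V m) = Cone).
  { destruct HU as [U1 _]. unfold inner, col. rewrite U1 by auto. unfold kron.
    rewrite Nat.eqb_refl. reflexivity. }
  rewrite (inner_conj M h1 h2) in E2.
  rewrite (inner_conj M h1 (col V m)), (inner_conj M h2 (col V m)), Hv in E3.
  rewrite inner_self_real in E1, E2.
  fold la X Y G in E1, E2, E3. unfold g11, g22.
  set (p := vnorm2 M h1) in *. set (q := vnorm2 M h2) in *.
  clearbody X Y G la p q. destruct X, Y, G.
  unfold Cnorm2, Cadd, Cmul, Cconj, RtoC, Cone in *; simpl in *.
  injection E1 as E1a E1b. injection E2 as E2a E2b. injection E3 as E3a E3b.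
  repeat split; try (apply Cpair_eq); lra.
Qed.

Lemma Cnorm2_RtoC r : Cnorm2 (RtoC r) = r * r.
Proof. unfold Cnorm2, RtoC; simpl; ring. Qed.

(** From [(a - la) X = G Y] and [G^* X = (b + la) Y]:
    [((a - la) (b + la) - |G|^2)] kills both [X] and [Y], which cannot both vanish. *)
Lemma eigvec_gram_relations (a b la : R) (G X Y : Cplx) :
  la <> 0 ->
  Cmul (RtoC (a - la)) X = Cmul G Y -> Cmul (Cconj G) X = Cmul (RtoC (b + la)) Y ->
  Cnorm2 X - Cnorm2 Y = la ->
  (a - la) * (b + la) = Cnorm2 G /\ (b + la) ^ 2 * Cnorm2 Y = Cnorm2 G * Cnorm2 X.
Proof.
  intros Hla E1 E2 En. split.
  - set (f := (a - la) * (b + la) - Cnorm2 G).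
    assert (FY : Cmul (RtoC f) Y = C0).
    { transitivity (Csub (Cmul (RtoC (a - la)) (Csub (Cmul (RtoC (b + la)) Y) (Cmul (Cconj G) X)))
                         (Cmul (Cconj G) (Csub (Cmul G Y) (Cmul (RtoC (a - la)) X)))).
      - unfold f, Cnorm2. csolve.
      - rewrite E2, <- E1. ring. }
    assert (FX : Cmul (RtoC f) X = C0).
    { transitivity (Csub (Cmul (RtoC (b + la)) (Csub (Cmul (RtoC (a - la)) X) (Cmul G Y)))
                         (Cmul G (Csub (Cmul (Cconj G) X) (Cmul (RtoC (b + la)) Y)))).
      - unfold f, Cnorm2. csolve.
      - rewrite E1, E2. ring. }
    destruct (Req_dec f 0) as [Hf|Hf]; [unfold f in Hf; lra|].
    apply Cmul_real_eq0 in FX, FY; auto. subst X Y.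
    unfold Cnorm2, C0 in En; simpl in En. lra.
  - apply (f_equal Cnorm2) in E2.
    rewrite !Cnorm2_mul, Cnorm2_conj, Cnorm2_RtoC in E2. lra.
Qed.

Lemma sin_acos_sqrt_ratio l n :
  0 < l <= n ->
  let s := sin (acos (sqrt l / sqrt n)) in 0 <= s /\ s * s * n = n - l.
Proof.
  intros Hl s.
  assert (Hx : sqrt l / sqrt n = sqrt (l / n)) by (rewrite sqrt_div_alt; auto; lra).
  assert (Hln : 0 <= l / n <= 1).
  { split; [apply Rlt_le, Rdiv_lt_0_compat; lra|].
    apply (Rmult_le_reg_r n); [lra|]. field_simplify; lra. }
  assert (Hsq : sqrt (l / n) * sqrt (l / n) = l / n) by (apply sqrt_sqrt; lra).
  assert (Hx1 : 0 <= sqrt (l / n) <= 1).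
  { split; [apply sqrt_pos|]. rewrite <- sqrt_1. apply sqrt_le_1_alt. lra. }
  unfold s. rewrite Hx, sin_acos by lra.
  split; [apply sqrt_pos|].
  rewrite sqrt_sqrt; unfold Rsqr; rewrite Hsq; [field; lra | lra].
Qed.

Section Angle.
Variables (l1 l2 s a b g : R).
Hypotheses (Hl1 : 0 < l1) (Hl2 : 0 < l2) (Hs0 : 0 <= s) (Hs1 : s < 1).
Hypotheses (Ha : a * (1 - s * s) = l1 + s * s * l2)
           (Hb : b * (1 - s * s) = s * s * l1 + l2)
           (Hg : g * (1 - s * s) = s * (l1 + l2)).

Lemma gram_det_by_angle : a * b - g * g = l1 * l2.
Proof.
  assert (Hc : 0 < 1 - s * s) by nra.
  assert (E : (a * b - g * g - l1 * l2) * (1 - s * s) ^ 2 = 0).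
  { transitivity ((a * (1 - s * s)) * (b * (1 - s * s)) - (g * (1 - s * s)) ^ 2
                  - l1 * l2 * (1 - s * s) ^ 2); [ring|].
    rewrite Ha, Hb, Hg. ring. }
  apply Rmult_integral in E. destruct E as [E|E]; [lra|].
  exfalso; revert E; apply pow_nonzero; lra.
Qed.

Lemma gain_ratio_below_threshold :
  s * l2 <= l1 -> s * l1 <= l2 ->
  maxmin_gain a b g * (a + b) / (l1 * l2) = (1 + s ^ 2) / (1 - s) ^ 2.
Proof.
  intros H1 H2. assert (Hc : 0 < 1 - s * s) by nra.
  assert (Hga : g <= a) by (apply (Rmult_le_reg_r (1 - s * s)); [lra | nra]).
  assert (Hgb : g <= b) by (apply (Rmult_le_reg_r (1 - s * s)); [lra | nra]).
  unfold maxmin_gain. destruct (Rle_dec g (Rmin a b)) as [_|Hm];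
    [|exfalso; apply Hm, Rmin_glb; assumption].
  rewrite gram_det_by_angle.
  replace a with ((l1 + s * s * l2) / (1 - s * s)) by (rewrite <- Ha; field; lra).
  replace b with ((s * s * l1 + l2) / (1 - s * s)) by (rewrite <- Hb; field; lra).
  replace g with (s * (l1 + l2) / (1 - s * s)) by (rewrite <- Hg; field; lra).
  assert (0 < (1 - s) * (1 - s)) by nra.
  field. repeat split; try lra. intro E. nra.
Qed.

Lemma gain_ratio_above_threshold :
  l1 <= l2 -> l1 < s * l2 ->
  maxmin_gain a b g * (a + b) / (l1 * l2)
  = (1 + s ^ 2) * (l1 / l2 + s ^ 2) * (1 + 1 / (l1 / l2)) / (1 - s ^ 2) ^ 2.
Proof.
  intros H1 H2. assert (Hc : 0 < 1 - s * s) by nra.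
  assert (Hag : a < g) by (apply (Rmult_lt_reg_r (1 - s * s)); [lra | nra]).
  assert (Hab : a <= b) by (apply (Rmult_le_reg_r (1 - s * s)); [lra | nra]).
  unfold maxmin_gain. rewrite (Rmin_left a b Hab).
  destruct (Rle_dec g a) as [Hm|_]; [lra|].
  replace a with ((l1 + s * s * l2) / (1 - s * s)) by (rewrite <- Ha; field; lra).
  replace b with ((s * s * l1 + l2) / (1 - s * s)) by (rewrite <- Hb; field; lra).
  field. repeat split; lra.
Qed.

End Angle.

Lemma gram_entries_from_eigen_relations (a b g l1 l2 nX nY s : R) :
  0 < l1 -> 0 < l2 -> 0 <= b -> 0 <= g -> 0 <= s -> 0 <= nY ->
  (a - l1) * (b + l1) = g * g -> (a + l2) * (b - l2) = g * g ->
  (b + l1) ^ 2 * nY = g * g * nX -> nX - nY = l1 -> s * s * nX = nY ->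
  s < 1 /\ a * (1 - s * s) = l1 + s * s * l2 /\ b * (1 - s * s) = s * s * l1 + l2 /\
  g * (1 - s * s) = s * (l1 + l2).
Proof.
  intros Hl1 Hl2 Hb Hg Hs HnY E1 E2 EY En Es.
  assert (HnX : 0 < nX) by lra.
  assert (Hs1 : s < 1).
  { destruct (Rlt_le_dec s 1) as [|Hs1]; auto. assert (1 <= s * s) by nra. nra. }
  assert (Hab : a - b = l1 - l2).
  { assert (E : (l1 + l2) * (a - b - l1 + l2) = 0)
      by (transitivity ((a - l1) * (b + l1) - (a + l2) * (b - l2)); [ring | lra]).
    apply Rmult_integral in E. destruct E; lra. }
  assert (Hsg : s * (b + l1) = g).
  { apply Rsqr_inj; [nra | lra|]. unfold Rsqr.
    apply (Rmult_eq_reg_r nX); [|lra].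
    transitivity ((b + l1) ^ 2 * (s * s * nX)); [ring|]. rewrite Es, EY. ring. }
  (* With [d = a - l1]: [g = s (d + l1 + l2)] and [g^2 = d (d + l1 + l2)]. *)
  set (d := a - l1) in *.
  assert (Hd : s * s * (d + l1 + l2) = d).
  { assert (E : (s * s * (d + l1 + l2) - d) * (d + l1 + l2) = 0).
    { transitivity ((s * (b + l1)) ^ 2 - d * (b + l1));
        [replace b with (d + l2) by (unfold d; lra); ring|].
      rewrite Hsg, E1. ring. }
    apply Rmult_integral in E. destruct E; [lra|]. unfold d in *; lra. }
  unfold d in *. repeat split; nra.
Qed.

Lemma gram_entries_by_angle M h1 h2 V l1 l2 :
  lin_indep2 M h1 h2 -> unitary M V -> 0 < l1 -> 0 < l2 -> eig_decomp M h1 h2 V l1 l2 ->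
  let s := sin (theta M h1 V l1) in
  let a := g11 M h1 h2 in let b := g22 M h1 h2 in let g := Cmod (inner M h1 h2) in
  0 <= s /\ s < 1 /\ a * (1 - s * s) = l1 + s * s * l2 /\
  b * (1 - s * s) = s * s * l1 + l2 /\ g * (1 - s * s) = s * (l1 + l2).
Proof.
  intros Hli HU Hl1 Hl2 HE s a b g.
  pose proof (lin_indep2_dim_ge2 _ _ _ Hli) as HM.
  pose proof (eigvec_equations M h1 h2 V l1 l2 0 HU HE ltac:(lia)) as (A1 & A2 & A3).
  pose proof (eigvec_equations M h1 h2 V l1 l2 1 HU HE ltac:(lia)) as (B1 & B2 & B3).
  simpl dval in *.
  destruct (eigvec_gram_relations _ _ l1 _ _ _ ltac:(lra) A1 A2 A3) as [R1 R2].
  destruct (eigvec_gram_relations _ _ (- l2) _ _ _ ltac:(lra) B1 B2 B3) as [R3 _].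
  set (X := inner M h1 (col V 0)) in *. set (Y := inner M h2 (col V 0)) in *.
  rewrite <- (Cmod_sq (inner M h1 h2)) in R1, R2, R3. fold g a b in R1, R2, R3.
  replace ((a - - l2) * (b + - l2)) with ((a + l2) * (b - l2)) in R3 by ring.
  (* [htilde11] is the conjugate of [X]. *)
  assert (Hth : theta M h1 V l1 = acos (sqrt l1 / sqrt (Cnorm2 X))).
  { unfold theta, Cmod. change (htilde11 M h1 V) with (inner M (col V 0) h1).
    rewrite inner_conj, Cnorm2_conj. reflexivity. }
  pose proof (Cnorm2_ge0 Y) as HY.
  destruct (sin_acos_sqrt_ratio l1 (Cnorm2 X) ltac:(lra)) as [Hs0 Hss].
  rewrite <- Hth in Hs0, Hss. fold s in Hs0, Hss.
  destruct (gram_entries_from_eigen_relations a b g l1 l2 (Cnorm2 X) (Cnorm2 Y) s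
              Hl1 Hl2 (vnorm2_ge0 M h2) (Cmod_ge0 _) Hs0 HY R1 R3 R2 A3 ltac:(lra))
    as (Hs1 & Ha & Hb & Hg).
  repeat split; assumption.
Qed.

Lemma maxmin_gain_sym a b g : maxmin_gain a b g = maxmin_gain b a g.
Proof.
  unfold maxmin_gain. rewrite Rmin_comm.
  replace (b * a) with (a * b) by ring. replace (b + a) with (a + b) by ring. reflexivity.
Qed.

Lemma gain_ratio_by_angle l1 l2 s c a b g :
  0 < l1 -> 0 < l2 -> 0 <= s -> s < 1 -> c * c = 1 - s * s ->
  a * (1 - s * s) = l1 + s * s * l2 -> b * (1 - s * s) = s * s * l1 + l2 ->
  g * (1 - s * s) = s * (l1 + l2) ->
  let kappa := l1 / l2 in
  let ratio := maxmin_gain a b g * (a + b) / (l1 * l2) in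
  (0 < kappa <= 1 -> 0 <= s <= kappa -> ratio = (1 + s ^ 2) / (1 - s) ^ 2) /\
  (0 < kappa <= 1 -> kappa < s < 1 ->
     ratio = (1 + s ^ 2) * (kappa + s ^ 2) * (1 + 1 / kappa) / c ^ 4) /\
  (kappa > 1 -> 0 <= s <= 1 / kappa -> ratio = (1 + s ^ 2) / (1 - s) ^ 2) /\
  (kappa > 1 -> 1 / kappa < s < 1 ->
     ratio = (1 + s ^ 2) * (1 / kappa + s ^ 2) * (1 + kappa) / c ^ 4).
Proof.
  intros Hl1 Hl2 Hs0 Hs1 Hc Ha Hb Hg kappa ratio.
  assert (Hk : kappa * l2 = l1) by (unfold kappa; field; lra).
  assert (Hik : 1 / kappa * l1 = l2) by (unfold kappa; field; lra).
  replace (c ^ 4) with ((1 - s ^ 2) ^ 2) by (replace (c ^ 4) with ((c * c) ^ 2) by ring; rewrite Hc; ring).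
  repeat split; intros Hkap Hs.
  - apply gain_ratio_below_threshold; auto; nra.
  - apply gain_ratio_above_threshold; auto; nra.
  - apply gain_ratio_below_threshold; auto; nra.
  - unfold ratio. rewrite maxmin_gain_sym, (Rplus_comm a b), (Rmult_comm l1 l2).
    rewrite (gain_ratio_above_threshold l2 l1 s b a g); try lra; try nra.
    assert (0 < 1 - s ^ 2) by nra.
    unfold kappa. field. repeat split; lra.
Qed.

Theorem corollary1 (M : nat) (h1 h2 : nat -> Cplx) (P sigma2 : R)
    (V : nat -> nat -> Cplx) (l1 l2 : R) :
  lin_indep2 M h1 h2 -> 0 < P -> 0 < sigma2 ->
  unitary M V -> 0 < l1 -> 0 < l2 -> eig_decomp M h1 h2 V l1 l2 ->
  let kappa := l1 / l2 in
  let th := theta M h1 V l1 in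
  exists snr_md : R,
    is_SNR_md M h1 h2 P sigma2 snr_md /\
    let eta := 10 * log10 (snr_md / SNR_zf M h1 h2 P sigma2) in
    ((0 < kappa <= 1 -> 0 <= sin th <= kappa ->
        eta = 10 * log10 ((1 + sin th ^ 2) / (1 - sin th) ^ 2)) /\
     (0 < kappa <= 1 -> kappa < sin th < 1 ->
        eta = 10 * log10 ((1 + sin th ^ 2) * (kappa + sin th ^ 2) * (1 + 1 / kappa)
                          / cos th ^ 4)) /\
     (kappa > 1 -> 0 <= sin th <= 1 / kappa ->
        eta = 10 * log10 ((1 + sin th ^ 2) / (1 - sin th) ^ 2)) /\
     (kappa > 1 -> 1 / kappa < sin th < 1 ->
        eta = 10 * log10 ((1 + sin th ^ 2) * (1 / kappa + sin th ^ 2) * (1 + kappa)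
                          / cos th ^ 4))).
Proof.
  intros Hli HP Hs2 HU Hl1 Hl2 HE kappa th.
  destruct (gram_entries_by_angle M h1 h2 V l1 l2 Hli HU Hl1 Hl2 HE)
    as (Hs0 & Hs1 & Ha & Hb & Hg).
  set (a := g11 M h1 h2) in *. set (b := g22 M h1 h2) in *.
  set (g := Cmod (inner M h1 h2)) in *. fold th in Hs0, Hs1, Ha, Hb, Hg.
  assert (Hdet : gdet M h1 h2 = l1 * l2)
    by (rewrite gdet_Cmod; apply (gram_det_by_angle l1 l2 (sin th)); assumption).
  assert (Hd : 0 < gdet M h1 h2) by (rewrite Hdet; nra).
  destruct (gdet_pos_gram_diag M h1 h2 Hd) as [Ha0 Hb0]. fold a b in Ha0, Hb0.
  exists (/ sigma2 * (P * maxmin_gain a b g)). split.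
  { exact (is_SNR_md_maxmin_gain M h1 h2 P sigma2 HP Hs2 Hd). }
  cbv zeta. rewrite SNR_zf_gram, Hdet. fold a b.
  replace (/ sigma2 * (P * maxmin_gain a b g) / (P / (sigma2 * ((a + b) / (l1 * l2)))))
    with (maxmin_gain a b g * (a + b) / (l1 * l2)) by (field; repeat split; lra).
  assert (Hc : cos th * cos th = 1 - sin th * sin th)
    by (pose proof (sin2_cos2 th) as E; unfold Rsqr in E; lra).
  destruct (gain_ratio_by_angle l1 l2 (sin th) (cos th) a b g Hl1 Hl2 Hs0 Hs1 Hc Ha Hb Hg)
    as (G1 & G2 & G3 & G4).
  repeat split; intros Hkap Hs; f_equal; f_equal; auto.
Qed.
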